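(* Let $m\ge3$ be odd and $n\ge2$. The $m$th order $n$-dimensional Hilbert tensor $\mathcal{A}=(a_{i_1\dots i_m})$, $a_{i_1\dots i_m}=\frac{1}{i_1+\cdots+i_m+1}$ for $i_1,\dots,i_m\in\{0,\dots,n-1\}$, is a strict Hankel tensor, and hence a strongly SOS tensor.
   Context: Index tensors by $\{0,\dots,n-1\}$. A Hankel tensor of order $k$ and dimension $n$ is a tensor with $a_{i_1\dots i_k}=h_{i_1+\cdots+i_k}$ for a generating vector $\mathbf{h}=(h_0,\dots,h_{(n-1)k})$. When $k$ is even, its associated Hankel matrix is the $((n-1)k/2+1)\times((n-1)k/2+1)$ matrix $(h_{p+q})_{p,q=0}^{(n-1)k/2}$, and the even order Hankel tensor is a strong Hankel tensor if this matrix is positive semi-definite. For an odd order $m$ symmetric Hankel tensor $\mathcal{A}$ and $i\in\{0,\dots,n-1\}$, let $\mathcal{A}_i=(a_{ii_2\dots i_m})$ be the $(m-1)$th order Hankel tensor obtained by fixing the first index at $i$ (generating vector $(h_{i+k})_{k=0}^{(n-1)(m-1)}$). $\mathcal{A}$ is a strict Hankel tensor if $\mathcal{A}_i$ is a strong Hankel tensor for every $i=0,\dots,n-1$. For odd $m$ and symmetric $\mathcal{A}$, with $F_i(\mathbf{x})=\sum_{i_2,\dots,i_m}a_{ii_2\dots i_m}x_{i_2}\cdots x_{i_m}$, $\mathcal{A}$ is a strongly SOS tensor if each $F_i$ is a sum of squares of real polynomials. *)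

From mathcomp Require Import all_boot all_algebra.
From mathcomp Require Import reals.
From mathcomp Require Import mpoly.

Unset Printing Implicit Defensive.

Import GRing.Theory Num.Theory.
Local Open Scope ring_scope.

(* A tensor of order k is only ever evaluated on
   index sequences of length k (all predicates below quantify over
   sequences of the relevant length only). *)
Definition tensor (R : realType) (n : nat) := seq 'I_n -> R.

Definition idx_sum {n : nat} (s : seq 'I_n) : nat := (\sum_(x <- s) (x : nat))%N.

Definition symmetric_tensor {R : realType} (k n : nat) (A : tensor R n) : Prop :=
  forall s s' : seq 'I_n, size s = k -> perm_eq s s' -> A s = A s'.

Definition hankel_gen {R : realType} (k n : nat) (A : tensor R n) (h : nat -> R) : Prop :=
  forall s : seq 'I_n, size s = k -> A s = h (idx_sum s).

Definition hankel_tensor {R : realType} (k n : nat) (A : tensor R n) : Prop :=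
  exists h : nat -> R, hankel_gen k n A h.

Definition hankel_matrix {R : realType} (k n : nat) (h : nat -> R) :
  'M[R]_(((n.-1 * k)./2).+1) :=
  \matrix_(p, q) h (p + q)%N.

Definition psd {R : realType} {N : nat} (M : 'M[R]_N) : Prop :=
  forall x : 'cV[R]_N, 0 <= (x^T *m M *m x) 0 0.

Definition strong_hankel {R : realType} (k n : nat) (A : tensor R n) : Prop :=
  ~~ odd k /\ exists h : nat -> R, hankel_gen k n A h /\ psd (hankel_matrix k n h).

Definition fix_first {R : realType} {n : nat} (A : tensor R n) (i : 'I_n) : tensor R n :=
  fun s => A (i :: s).

Definition strict_hankel {R : realType} (m n : nat) (A : tensor R n) : Prop :=
  [/\ odd m, symmetric_tensor m n A, hankel_tensor m n A &
      forall i : 'I_n, strong_hankel m.-1 n (fix_first A i)].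

Definition Fpoly {R : realType} (m n : nat) (A : tensor R n) (i : 'I_n) : {mpoly R[n]} :=
  \sum_(t : (m.-1).-tuple 'I_n) A (i :: tval t) *: \prod_(j <- tval t) 'X_j.

Definition is_sos {R : realType} {n : nat} (p : {mpoly R[n]}) : Prop :=
  exists qs : seq {mpoly R[n]}, p = \sum_(q <- qs) q ^+ 2.

Definition strongly_sos {R : realType} (m n : nat) (A : tensor R n) : Prop :=
  [/\ odd m, symmetric_tensor m n A & forall i : 'I_n, is_sos (Fpoly m n A i)].

Definition hilbert_tensor (R : realType) (n : nat) : tensor R n :=
  fun s => ((idx_sum s)%:R + 1)^-1.

From mathcomp Require Import all_boot all_algebra.
From mathcomp Require Import reals.
From mathcomp Require Import mpoly.
From mathcomp Require Import ring.

Import order.Order.TTheory GRing.Theory Num.Theory.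
Local Open Scope ring_scope.

(* The slice A_i is Hankel with generating vector h_j = 1/(i+j+1), so its
   Hankel matrix is the Cauchy-type matrix 1/(a_p + a_q) with
   a_p = p + (i+1)/2 > 0.  Such a matrix is a Gram matrix
   sum_r w_r(p) w_r(q): splitting off the rank-one term
   2 a_0 / ((a_p + a_0)(a_q + a_0)) leaves b_p b_q / (a_p + a_q) with
   b_p = (a_p - a_0)/(a_p + a_0), which vanishes in row and column 0, so
   induction applies to the shifted sequence.  A Gram matrix is PSD, and
   splitting the 2k free indices of F_i into two halves u, v, the same
   factorization gives F_i = sum_r (sum_u w_r(|u|) x^u)^2. *)

Lemma cauchy_gram (R : rcfType) (N : nat) (a : nat -> R) :
  (forall p, 0 < a p) ->
  exists w : nat -> nat -> R, forall p q, (p < N)%N -> (q < N)%N ->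
    (a p + a q)^-1 = \sum_(0 <= r < N) w r p * w r q.
Proof.
elim: N a => [|N IH] a a_gt0; first by exists (fun _ _ => 0).
have [w IHw] := IH (fun p => a p.+1) (fun p => a_gt0 p.+1).
pose c := Num.sqrt (2 * a 0%N).
pose b p := (a p - a 0%N) / (a p + a 0%N).
have b0 : b 0%N = 0 by rewrite /b subrr mul0r.
have peel p q : (a p + a q)^-1 =
    c / (a p + a 0%N) * (c / (a q + a 0%N)) + b p * b q * (a p + a q)^-1.
  have a0 := a_gt0 0%N; have ap := a_gt0 p; have aq := a_gt0 q.
  have c2 : c * c = 2 * a 0%N by rewrite -expr2 sqr_sqrtr // mulr_ge0 // ltW.
  rewrite mulrACA -invfM c2 /b.
  by field; rewrite !gt_eqF ?addr_gt0.
exists (fun r p => if r is r'.+1 then b p * w r' p.-1 else c / (a p + a 0%N)).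
move=> p q p_lt q_lt; rewrite peel big_nat_recl //=; congr (_ + _).
have -> : \sum_(0 <= r < N) b p * w r p.-1 * (b q * w r q.-1)
    = b p * b q * \sum_(0 <= r < N) w r p.-1 * w r q.-1.
  by rewrite mulr_sumr; apply: eq_bigr => r _; ring.
case: p p_lt => [|p] p_lt; first by rewrite b0 !mul0r.
case: q q_lt => [|q] q_lt; first by rewrite b0 mulr0 !mul0r.
by rewrite -IHw.
Qed.

Lemma hilbert_gram (R : rcfType) (c N : nat) :
  exists w : nat -> nat -> R, forall p q, (p < N)%N -> (q < N)%N ->
    ((c + (p + q))%:R + 1)^-1 = \sum_(0 <= r < N) w r p * w r q.
Proof.
pose a p : R := p%:R + (c%:R + 1) / 2.
have a_gt0 p : 0 < a p by rewrite ltr_wpDl // divr_gt0 // ltr_wpDl.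
have [w Hw] := @cauchy_gram R N a a_gt0.
exists w => p q p_lt q_lt; rewrite -Hw //; congr (_^-1).
by rewrite /a !natrD; field.
Qed.

Lemma psd_of_gram (R : realType) (N L : nat) (M : 'M[R]_N) (w : nat -> nat -> R) :
  (forall p q : 'I_N, M p q = \sum_(0 <= r < L) w r p * w r q) -> psd M.
Proof.
move=> Mw x; pose W : 'M[R]_(L, N) := \matrix_(r, p) w r p.
have -> : M = W^T *m W.
  apply/matrixP => p q; rewrite Mw big_mkord !mxE.
  by apply: eq_bigr => r _; rewrite !mxE.
rewrite !mulmxA -mulmxA -trmx_mul mxE.
by apply: sumr_ge0 => r _; rewrite mxE -expr2 sqr_ge0.
Qed.

Lemma idx_sum_cons (n : nat) (i : 'I_n) (s : seq 'I_n) :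
  idx_sum (i :: s) = (i + idx_sum s)%N.
Proof. by rewrite /idx_sum big_cons. Qed.

Lemma idx_sum_cat (n : nat) (s t : seq 'I_n) :
  idx_sum (s ++ t) = (idx_sum s + idx_sum t)%N.
Proof. by rewrite /idx_sum big_cat. Qed.

Lemma idx_sum_le (n : nat) (s : seq 'I_n) : (idx_sum s <= n.-1 * size s)%N.
Proof.
elim: s => [|x s IH]; first by rewrite /idx_sum big_nil.
rewrite idx_sum_cons /= mulnS leq_add //.
by rewrite -ltnS prednK ?ltn_ord // (leq_ltn_trans _ (ltn_ord x)).
Qed.

Lemma big_tuple_cat (T : finType) (a b : nat) (V : nmodType)
    (F : (a + b).-tuple T -> V) :
  \sum_(t : (a + b).-tuple T) F t =
  \sum_(u : a.-tuple T) \sum_(v : b.-tuple T) F (cat_tuple u v).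
Proof.
rewrite pair_big /= (reindex (fun uv => cat_tuple uv.1 uv.2)) //=.
have take_a (t : (a + b).-tuple T) : size (take a t) == a.
  by rewrite size_takel // size_tuple leq_addr.
have drop_b (t : (a + b).-tuple T) : size (drop a t) == b.
  by rewrite size_drop size_tuple addKn.
apply: onW_bij; exists (fun t => (Tuple (take_a t), Tuple (drop_b t))).
- case=> u v; congr pair; apply: val_inj => /=.
    by rewrite take_size_cat // size_tuple.
  by rewrite drop_size_cat // size_tuple.
- by move=> t; apply: val_inj; rewrite /= cat_take_drop.
Qed.

Lemma sum_gram_scale (R : comNzRingType) (A : comAlgType R) (T : finType)
    (I : seq nat) (w : nat -> T -> R) (f : T -> A) :
  \sum_(u : T) \sum_(v : T) (\sum_(r <- I) w r u * w r v) *: (f u * f v) =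
  \sum_(r <- I) (\sum_(u : T) w r u *: f u) ^+ 2.
Proof.
transitivity (\sum_(r <- I) \sum_(u : T) \sum_(v : T) (w r u * w r v) *: (f u * f v)).
  rewrite [RHS]exchange_big; apply: eq_bigr => u _.
  by rewrite [RHS]exchange_big; apply: eq_bigr => v _; rewrite scaler_suml.
apply: eq_bigr => r _; rewrite expr2 mulr_suml; apply: eq_bigr => u _.
by rewrite mulr_sumr; apply: eq_bigr => v _; rewrite -scalerAl -scalerAr scalerA.
Qed.

Lemma Fpoly_sos_of_gram (R : realType) (n k : nat) (A : tensor R n) (i : 'I_n)
    (I : seq nat) (w : nat -> k.-tuple 'I_n -> R) :
  (forall u v : k.-tuple 'I_n, A (i :: u ++ v) = \sum_(r <- I) w r u * w r v) ->
  is_sos (Fpoly (k + k).+1 n A i).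
Proof.
move=> Aw.
exists [seq \sum_(u : k.-tuple 'I_n) w r u *: \prod_(j <- u) 'X_j | r <- I].
rewrite big_map -sum_gram_scale /Fpoly /= big_tuple_cat.
by apply: eq_bigr => u _; apply: eq_bigr => v _; rewrite /= Aw big_cat.
Qed.

Lemma hilbert_symmetric (R : realType) (k n : nat) :
  symmetric_tensor k n (hilbert_tensor R n).
Proof. by move=> s s' _ ss'; rewrite /hilbert_tensor /idx_sum (perm_big _ ss'). Qed.

Lemma hilbert_hankel (R : realType) (k n : nat) :
  hankel_tensor k n (hilbert_tensor R n).
Proof. by exists (fun j => (j%:R + 1)^-1). Qed.

Lemma hilbert_slice_strong (R : realType) (e n : nat) (i : 'I_n) :
  ~~ odd e -> strong_hankel e n (fix_first (hilbert_tensor R n) i).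
Proof.
move=> e_even; split=> //; exists (fun j => ((i + j)%:R + 1)^-1); split.
  by move=> s _; rewrite /fix_first /hilbert_tensor idx_sum_cons.
have [w Hw] := hilbert_gram R i ((n.-1 * e)./2).+1.
by apply: (@psd_of_gram _ _ _ _ w) => p q; rewrite mxE Hw.
Qed.

Lemma hilbert_Fpoly_sos (R : realType) (k n : nat) (i : 'I_n) :
  is_sos (Fpoly (k + k).+1 n (hilbert_tensor R n) i).
Proof.
have [w Hw] := hilbert_gram R i (n.-1 * k).+1.
apply: (@Fpoly_sos_of_gram _ _ _ _ _ _ (fun r u => w r (idx_sum u))) => u v.
have idx_lt (t : k.-tuple 'I_n) : (idx_sum t < (n.-1 * k).+1)%N.
  by rewrite ltnS -{2}(size_tuple t) idx_sum_le.
by rewrite /hilbert_tensor idx_sum_cons idx_sum_cat Hw.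
Qed.

Theorem theorem4p5 (R : realType) (m n : nat) :
  odd m -> (3 <= m)%N -> (2 <= n)%N ->
  strict_hankel m n (hilbert_tensor R n) /\ strongly_sos m n (hilbert_tensor R n).
Proof.
move=> m_odd _ _.
have [k m_eq] : exists k, m = (k + k).+1.
  by exists m./2; rewrite addnn -{1}(odd_double_half m) m_odd.
rewrite {}m_eq in m_odd *; split; split=> //.
- exact: hilbert_symmetric.
- exact: hilbert_hankel.
- by move=> i; apply: hilbert_slice_strong; rewrite addnn odd_double.
- exact: hilbert_symmetric.
- exact: hilbert_Fpoly_sos.
Qed.
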